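(* Let $G$ be a commutative group, $H$ a subgroup, $G'=G/H$ and $\varphi:G\to G'$ the natural homomorphism, $1<p<\infty$, and $f\in\ell^1(G)$ nonnegative. Define $f_\varphi$ on $G'$ by $f_\varphi(x)=\gamma_p\bigl(f|_{\varphi^{-1}(x)}\bigr)$. Then $\gamma_p(f)\ge\gamma_p(f_\varphi)$, where $\gamma_p(f_\varphi)$ is computed in $G'$.
   Context: For nonnegative functions $f,g$ on a commutative group $K$, $(f\star g)(x)=\max_t f(t)g(x-t)$. For nonnegative $f\in\ell^1(K)$ and $1/p+1/q=1$, $\gamma_p(f)=\inf_{g,h}\frac{\|f\star g\star h\|_1}{\|g\|_p\|h\|_q}$, infimum over nonzero nonnegative $g,h\in\ell^1(K)$. Here $f|_{\varphi^{-1}(x)}$ denotes the function on $G$ equal to $f$ on the coset $\varphi^{-1}(x)$ and $0$ elsewhere, and $\gamma_p$ of it is computed in $G$. *)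

From HB Require Import structures.
From mathcomp Require Import all_boot all_order all_algebra.
From mathcomp Require Import all_classical all_reals all_analysis.
Set Implicit Arguments. Unset Strict Implicit. Unset Printing Implicit Defensive.
Import Order.TTheory GRing.Theory Num.Theory.
Local Open Scope classical_set_scope.
Local Open Scope ring_scope.

Section GammaDefs.
Context {R : realType} {K : zmodType}.

Definition nonneg_l1 (f : K -> R) : Prop :=
  (forall x, 0 <= f x) /\ summable [set: K] (fun x => (f x)%:E).

Definition norm1 (f : K -> R) : R := fine (\esum_(x in [set: K]) (f x)%:E).

Definition normp (p : R) (g : K -> R) : R :=
  (fine (\esum_(x in [set: K]) ((g x) `^ p)%:E)) `^ (p^-1).

Definition mconv (f g : K -> R) : K -> R :=
  fun x => sup [set f t * g (x - t) | t in [set: K]].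

(* gamma_p(f) = inf over nonzero nonnegative g, h in l^1 of
   ||f*g*h||_1 / (||g||_p ||h||_q), with 1/p + 1/q = 1 *)
Definition gammap (p : R) (f : K -> R) : R :=
  inf [set r : R | exists g h : K -> R,
         [/\ nonneg_l1 g, nonneg_l1 h, g <> (fun=> 0), h <> (fun=> 0) &
             r = norm1 (mconv (mconv f g) h) /
                 (normp p g * normp (p / (p - 1)) h)]].

End GammaDefs.

(* For admissible g, h on G put g'(c) = ‖g|φ⁻¹(c)‖_p and h'(c) = ‖h|φ⁻¹(c)‖_q on
   G'. The fibres partition G, so ‖g'‖_p = ‖g‖_p and ‖h'‖_q = ‖h‖_q. The
   max-convolution of functions carried by the fibres over a, b and d is carried by
   the fibre over a + b + d, where it is dominated by f ⋆ g ⋆ h; by the definition of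
   γ_p this gives f_φ(a) g'(b) h'(d) ≤ ‖(f ⋆ g ⋆ h)|φ⁻¹(a+b+d)‖_1. Taking the max over
   a + b + d = c and summing over c yields ‖f_φ ⋆ g' ⋆ h'‖_1 ≤ ‖f ⋆ g ⋆ h‖_1, so
   γ_p(f_φ) is at most the ratio attached to (g, h); now take the infimum. *)

From HB Require Import structures.
From mathcomp Require Import all_boot all_order all_algebra.
From mathcomp Require Import all_classical all_reals all_analysis.
From mathcomp Require Import lra.
Set Implicit Arguments. Unset Strict Implicit. Unset Printing Implicit Defensive.
Import Order.TTheory GRing.Theory Num.Theory.
Local Open Scope classical_set_scope.
Local Open Scope ring_scope.

Section esum_facts.
Variables (R : realType) (T : choiceType).
Implicit Types (S : set T) (a : T -> \bar R).

(* The empty subset already contributes [0] to the supremum. *)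
Lemma esum_ge0_any S a : (0 <= \esum_(i in S) a i)%E.
Proof.
apply: ereal_sup_ubound; exists set0; first exact: fsets_set0.
by rewrite fsbig_set0.
Qed.

Lemma esumZl_le S a (c : \bar R) : (0 <= c)%E -> (forall x, 0 <= a x)%E ->
  (\esum_(i in S) (c * a i) <= c * \esum_(i in S) a i)%E.
Proof.
move=> c0 a0; apply: ge_ereal_sup => _ [X [finX XS] <-].
rewrite -ge0_mule_fsumr //; apply: lee_wpmul2l => //.
by apply: ereal_sup_ubound; exists X.
Qed.

Lemma term_le_esum a x : (forall y, 0 <= a y)%E ->
  (a x <= \esum_(i in [set: T]) a i)%E.
Proof.
move=> a0; apply: esum_ge; exists [set x]; last by rewrite fsbig_set1.
by split => //; exact: finite_set1.
Qed.

End esum_facts.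

Lemma esum_fibers (R : realType) (T T' : choiceType) (phi : T -> T')
    (a : T -> \bar R) : (forall x, 0 <= a x)%E ->
  \esum_(x in [set: T]) a x =
  \esum_(c in [set: T']) \esum_(x in [set: T]) (if phi x == c then a x else 0)%E.
Proof.
move=> a0.
transitivity (\esum_(c in [set: T']) \esum_(x in [set x | phi x = c]) a x).
  rewrite esum_esum // (@reindex_esum _ _ _ [set: T] _ (fun x => (phi x, x))) //.
  split=> [x _ //|x y _ _ [] //|[c x] [_ /= <-]]; by exists x.
apply: eq_esum => c _; rewrite esum_mkcond; apply: eq_esum => x _.
by case: eqP => [<-|ne]; [rewrite mem_set | rewrite memNset].
Qed.

Section l1.
Variables (R : realType) (K : zmodType).
Implicit Types f g h : K -> R.

Lemma nonneg_l1_esum f : nonneg_l1 f ->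
  \esum_(x in [set: K]) (f x)%:E = (norm1 f)%:E.
Proof.
move=> [f0 fs]; rewrite /norm1 fineK //; move: fs; rewrite summableE.
by under eq_esum do rewrite gee0_abs ?lee_fin //.
Qed.

Lemma norm1_ge0 f : 0 <= norm1 f.
Proof. exact/fine_ge0/esum_ge0_any. Qed.

Lemma le_norm1 f x : nonneg_l1 f -> f x <= norm1 f.
Proof.
move=> hf; rewrite -lee_fin -nonneg_l1_esum //; apply: term_le_esum => y.
by rewrite lee_fin; case: hf.
Qed.

Lemma nonneg_l1_esum_lty f : (forall x, 0 <= f x) ->
  (\esum_(x in [set: K]) (f x)%:E < +oo)%E -> nonneg_l1 f.
Proof.
move=> f0 lt; split => //; rewrite /summable.
by under eq_esum do rewrite gee0_abs ?lee_fin //.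
Qed.

Lemma ler_norm1 f g : (forall x, 0 <= f x <= g x) -> nonneg_l1 g ->
  norm1 f <= norm1 g.
Proof.
move=> fg hg.
have hf : nonneg_l1 f.
  apply: nonneg_l1_esum_lty => [x|]; first by case/andP: (fg x).
  rewrite (le_lt_trans _ (ltry (norm1 g))) // -nonneg_l1_esum //.
  by apply: le_esum => x _; rewrite lee_fin; case/andP: (fg x).
rewrite -lee_fin -!nonneg_l1_esum //; apply: le_esum => x _.
by rewrite lee_fin; case/andP: (fg x).
Qed.

Lemma esum_esum_shift (a : K -> K -> \bar R) : (forall t s, 0 <= a t s)%E ->
  \esum_(x in [set: K]) \esum_(t in [set: K]) a t (x - t) =
  \esum_(t in [set: K]) \esum_(s in [set: K]) a t s.
Proof.
move=> a0; rewrite !esum_esum //.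
have -> : [set: K] `*`` (fun=> [set: K]) = [set: K * K] by apply/seteqP.
rewrite [RHS](@reindex_esum _ _ _ [set: K * K] [set: K * K]
  (fun k => (k.2, k.1 - k.2)) (fun k => a k.1 k.2)) //.
rewrite setTT_bijective; exists (fun k => (k.1 + k.2, k.1)).
  by case=> x t /=; rewrite addrC subrK.
by case=> t s /=; rewrite [t + s]addrC addrK.
Qed.

Lemma esum_esum_mul_le f g : nonneg_l1 f -> nonneg_l1 g ->
  (\esum_(t in [set: K]) \esum_(s in [set: K]) (f t * g s)%:E <=
   (norm1 f * norm1 g)%:E)%E.
Proof.
move=> hf hg; have f0 := hf.1; have g0 := hg.1.
apply: (@le_trans _ _ (\esum_(t in [set: K]) ((norm1 g)%:E * (f t)%:E)%E)).
  apply: le_esum => t _; under eq_esum do rewrite EFinM.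
  rewrite muleC -(nonneg_l1_esum hg).
  by apply: esumZl_le => [|s]; rewrite lee_fin.
rewrite mulrC EFinM -(nonneg_l1_esum hf).
by apply: esumZl_le => [|s]; rewrite lee_fin ?norm1_ge0.
Qed.

Section mconv.
Variables (f g : K -> R) (hf : nonneg_l1 f) (hg : nonneg_l1 g).

Lemma has_ubound_mconv x : has_ubound [set f t * g (x - t) | t in [set: K]].
Proof.
exists (norm1 f * norm1 g) => _ [t _ <-].
by apply: ler_pM; [exact: hf.1|exact: hg.1|exact: le_norm1|exact: le_norm1].
Qed.

Lemma le_mconv x t : f t * g (x - t) <= mconv f g x.
Proof. by apply: (ub_le_sup (has_ubound_mconv x)); exists t. Qed.

Lemma mconv_ge0 x : 0 <= mconv f g x.
Proof. by apply: le_trans (le_mconv x 0); rewrite mulr_ge0 ?hf.1 ?hg.1. Qed.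

Lemma mconv_le_esum x :
  ((mconv f g x)%:E <= \esum_(t in [set: K]) (f t * g (x - t))%:E)%E.
Proof.
set E := esum _ _.
have [finE|] := boolP (E \is a fin_num); last first.
  by rewrite ge0_fin_numE ?esum_ge0_any // ltey negbK => /eqP ->; exact: leey.
rewrite -(fineK finE) lee_fin; apply: ge_sup; first by exists (f 0 * g (x - 0)), 0.
move=> _ [t _ <-]; rewrite -lee_fin fineK //.
by apply: (@term_le_esum _ _ (fun t => (f t * g (x - t))%:E)) => y;
  rewrite lee_fin mulr_ge0 ?hf.1 ?hg.1.
Qed.

Lemma nonneg_l1_mconv : nonneg_l1 (mconv f g).
Proof.
apply: nonneg_l1_esum_lty; first exact: mconv_ge0.
apply: le_lt_trans (ltry (norm1 f * norm1 g)).
apply: le_trans (le_esum (fun x _ => mconv_le_esum x)) _.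
rewrite (esum_esum_shift (a := fun t s => (f t * g s)%:E)); last first.
  by move=> t s; rewrite lee_fin mulr_ge0 ?hf.1 ?hg.1.
exact: esum_esum_mul_le.
Qed.

End mconv.

Lemma ler_mconv f1 f2 g1 g2 x :
    (forall t, 0 <= f1 t <= f2 t) -> (forall t, 0 <= g1 t <= g2 t) ->
    nonneg_l1 f2 -> nonneg_l1 g2 ->
  mconv f1 g1 x <= mconv f2 g2 x.
Proof.
move=> hf hg hf2 hg2; apply: ge_sup; first by exists (f1 0 * g1 (x - 0)), 0.
move=> _ [t _ <-]; apply: le_trans (le_mconv hf2 hg2 x t).
by case/andP: (hf t) => ? ?; case/andP: (hg (x - t)) => ? ?; apply: ler_pM.
Qed.

End l1.

Section normp.
Variables (R : realType) (K : zmodType).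
Implicit Types (k : K -> R) (p : R).

Lemma normp_ge0 p k : 0 <= normp p k.
Proof. exact: powR_ge0. Qed.

Lemma normp0 p : p != 0 -> normp p (fun _ : K => 0 : R) = 0.
Proof. by move=> p0; rewrite /normp powR0 // esum1 ?powR0 ?invr_eq0. Qed.

(* [a ^ p = a * a ^ (p - 1) <= a * B ^ (p - 1)] when [0 <= a <= B]. *)
Lemma esum_powR_le (a : K -> R) (B p : R) : (forall x, 0 <= a x) ->
  (forall x, a x <= B) -> 1 <= p ->
  (\esum_(x in [set: K]) (a x `^ p)%:E <=
    (B `^ (p - 1))%:E * \esum_(x in [set: K]) (a x)%:E)%E.
Proof.
move=> a0 aB p1; have B0 : 0 <= B by apply: le_trans (aB 0).
apply: le_trans; last by apply: esumZl_le => [|x]; rewrite lee_fin ?powR_ge0.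
apply: le_esum => x _; rewrite -EFinM lee_fin.
rewrite -(mulr_powRB1 (a0 x)) ?(lt_le_trans ltr01) // mulrC.
apply: ler_wpM2r; first exact: a0.
by apply: ge0_ler_powR; rewrite ?nnegrE ?subr_ge0.
Qed.

Lemma esum_powR_le_norm1 p k : nonneg_l1 k -> 1 <= p ->
  (\esum_(x in [set: K]) (k x `^ p)%:E <= (norm1 k `^ p)%:E)%E.
Proof.
move=> hk p1; apply: le_trans (esum_powR_le hk.1 (fun x => le_norm1 x hk) p1) _.
rewrite nonneg_l1_esum // -EFinM lee_fin mulrC.
by rewrite mulr_powRB1 ?norm1_ge0 ?(lt_le_trans ltr01 p1).
Qed.

Lemma esum_powR_fin_num p k : nonneg_l1 k -> 1 <= p ->
  \esum_(x in [set: K]) (k x `^ p)%:E \is a fin_num.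
Proof.
move=> hk p1; rewrite ge0_fin_numE ?esum_ge0_any //.
exact: le_lt_trans (esum_powR_le_norm1 hk p1) (ltry _).
Qed.

Lemma normp_powR p k : nonneg_l1 k -> 1 <= p ->
  (normp p k `^ p)%:E = \esum_(x in [set: K]) (k x `^ p)%:E.
Proof.
move=> hk p1; have p0 : p != 0 by rewrite gt_eqF // (lt_le_trans ltr01).
rewrite /normp -powRrM mulVf // powRr1 ?fineK ?esum_powR_fin_num //.
exact/fine_ge0/esum_ge0_any.
Qed.

Lemma normp_neq0 p k : p != 0 -> normp p k != 0 -> k <> (fun=> 0).
Proof. by move=> p0 + k0; rewrite k0 normp0 ?eqxx. Qed.

Lemma normp_le_norm1 p k : nonneg_l1 k -> 1 <= p -> normp p k <= norm1 k.
Proof.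
move=> hk p1; have p0 : 0 < p by rewrite (lt_le_trans ltr01).
rewrite /normp -[leRHS](@powRr1 _ (norm1 k)) ?norm1_ge0 //.
rewrite -(mulfV (lt0r_neq0 p0)) powRrM.
apply: ge0_ler_powR; rewrite ?nnegrE ?invr_ge0 ?powR_ge0 ?(ltW p0) //.
  exact/fine_ge0/esum_ge0_any.
by rewrite -lee_fin fineK ?esum_powR_fin_num // esum_powR_le_norm1.
Qed.

Lemma normp_gt0 p k x : nonneg_l1 k -> 1 <= p -> k x != 0 -> 0 < normp p k.
Proof.
move=> hk p1 kx; rewrite /normp powR_gt0 // fine_gt0 //.
rewrite ltey_eq esum_powR_fin_num // andbT.
apply: lt_le_trans (term_le_esum (a := fun y => (k y `^ p)%:E) x _) => [|y].
  by rewrite lte_fin powR_gt0 // lt_def kx hk.1.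
by rewrite lee_fin powR_ge0.
Qed.

End normp.

Section gammap.
Variables (R : realType) (K : zmodType) (p : R) (f : K -> R).

Lemma gammap_le g h : nonneg_l1 g -> nonneg_l1 h ->
    g <> (fun=> 0) -> h <> (fun=> 0) ->
  gammap p f <= norm1 (mconv (mconv f g) h) / (normp p g * normp (p / (p - 1)) h).
Proof.
move=> hg hh g0 h0; apply: ge_inf; last by exists g, h.
exists 0 => _ [g' [h' [_ _ _ _ ->]]].
by rewrite divr_ge0 ?norm1_ge0 // mulr_ge0 // normp_ge0.
Qed.

Lemma gammap_ge r :
    (forall g h, nonneg_l1 g -> nonneg_l1 h -> g <> (fun=> 0) -> h <> (fun=> 0) ->
       r <= norm1 (mconv (mconv f g) h) / (normp p g * normp (p / (p - 1)) h)) ->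
  r <= gammap p f.
Proof.
move=> r_lb; apply: lb_le_inf => [|_ [g [h [hg hh g0 h0 ->]]]]; last exact: r_lb.
pose delta (x : K) : R := if x == 0 then 1 else 0.
have hdelta : nonneg_l1 delta.
  apply: nonneg_l1_esum_lty => [x|]; first by rewrite /delta; case: ifP.
  rewrite (eq_esum (b := fun x => if x \in [set 0 : K] then 1%E else 0%E)).
    by rewrite -esum_mkcond esum_set1 ?ltry.
  by move=> x _; rewrite /delta; case: eqP => [->|x0]; [rewrite mem_set|rewrite memNset].
have delta_neq0 : delta <> (fun=> 0).
  by move=> /(congr1 (fun d => d 0)); rewrite /delta eqxx => /eqP; rewrite oner_eq0.
by exists (norm1 (mconv (mconv f delta) delta) /
           (normp p delta * normp (p / (p - 1)) delta)), delta, delta.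
Qed.

End gammap.

Lemma conjugate_exponent_ge1 (R : realFieldType) (p : R) : 1 < p -> 1 <= p / (p - 1).
Proof. by move=> p1; rewrite ler_pdivlMr ?subr_gt0 //; lra. Qed.

Definition restr_fiber {R : realType} {G G' : zmodType} (phi : G -> G') (c : G')
  (f : G -> R) : G -> R := fun y => if phi y == c then f y else 0.

Definition fiber_normp {R : realType} {G G' : zmodType} (phi : G -> G') (p : R)
  (g : G -> R) : G' -> R := fun c => normp p (restr_fiber phi c g).

Section fibers.
Variables (R : realType) (G G' : zmodType) (phi : G -> G').
Implicit Types (f g : G -> R) (p : R).

Lemma restr_fiber_ge0_le f c y : (forall x, 0 <= f x) ->
  0 <= restr_fiber phi c f y <= f y.
Proof. by move=> f0; rewrite /restr_fiber; case: ifP; rewrite ?f0 ?lexx. Qed.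

Lemma nonneg_l1_restr_fiber f c : nonneg_l1 f -> nonneg_l1 (restr_fiber phi c f).
Proof.
move=> hf; apply: nonneg_l1_esum_lty => [y|].
  by case/andP: (restr_fiber_ge0_le c y hf.1).
apply: le_lt_trans (ltry (norm1 f)); rewrite -nonneg_l1_esum //.
by apply: le_esum => y _; rewrite lee_fin; case/andP: (restr_fiber_ge0_le c y hf.1).
Qed.

Lemma norm1_fibers f : nonneg_l1 f ->
  \esum_(c in [set: G']) (norm1 (restr_fiber phi c f))%:E = (norm1 f)%:E.
Proof.
move=> hf; rewrite -nonneg_l1_esum // (esum_fibers phi); last first.
  by move=> x; rewrite lee_fin hf.1.
apply: eq_esum => c _; rewrite -(nonneg_l1_esum (nonneg_l1_restr_fiber c hf)).
by apply: eq_esum => x _; rewrite /restr_fiber; case: ifP.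
Qed.

Lemma normp_fiber_normp g p : nonneg_l1 g -> 1 <= p ->
  normp p (fiber_normp phi p g) = normp p g.
Proof.
move=> hg p1; have p0 : p != 0 by rewrite gt_eqF // (lt_le_trans ltr01).
rewrite /normp; congr (fine _ `^ _).
rewrite [RHS](esum_fibers phi); last by move=> x; rewrite lee_fin powR_ge0.
apply: eq_esum => c _.
rewrite (normp_powR (nonneg_l1_restr_fiber c hg)) //.
by apply: eq_esum => x _; rewrite /restr_fiber; case: ifP; rewrite ?powR0.
Qed.

Lemma nonneg_l1_fiber_normp g p : nonneg_l1 g -> 1 <= p ->
  nonneg_l1 (fiber_normp phi p g).
Proof.
move=> hg p1; apply: nonneg_l1_esum_lty => [c|]; first exact: normp_ge0.
apply: le_lt_trans (ltry (norm1 g)); rewrite -norm1_fibers //.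
apply: le_esum => c _; rewrite lee_fin.
exact: normp_le_norm1 (nonneg_l1_restr_fiber c hg) p1.
Qed.

Lemma fiber_normp_neq0 g p : nonneg_l1 g -> 1 <= p -> g <> (fun=> 0) ->
  fiber_normp phi p g <> (fun=> 0).
Proof.
move=> hg p1 g0.
have [x /eqP gx] : exists x, g x <> 0.
  by apply/existsNP => g0'; apply/g0/funext.
move=> /(congr1 (fun F => F (phi x))) /=; apply/eqP; rewrite gt_eqF //.
apply: (normp_gt0 (x := x) (nonneg_l1_restr_fiber _ hg) p1).
by rewrite /restr_fiber eqxx.
Qed.

Hypothesis phi_morph : {morph phi : x y / x + y}.

Lemma mconv_restr_fiber_le f g a b x : nonneg_l1 f -> nonneg_l1 g ->
  mconv (restr_fiber phi a f) (restr_fiber phi b g) x <=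
  restr_fiber phi (a + b) (mconv f g) x.
Proof.
move=> hf hg; rewrite [X in _ <= X]/restr_fiber.
have [_|phix] := eqVneq (phi x) (a + b).
  exact: ler_mconv _ (fun t => restr_fiber_ge0_le a t hf.1)
                   (fun t => restr_fiber_ge0_le b t hg.1) hf hg.
apply: ge_sup; first by exists (restr_fiber phi a f 0 * restr_fiber phi b g (x - 0)), 0.
move=> _ [t _ <-]; rewrite /restr_fiber.
case: eqP => [phit|]; case: eqP => [phixt|]; rewrite ?mul0r ?mulr0 //.
by move: phix; rewrite -(subrK t x) phi_morph phixt phit addrC eqxx.
Qed.

Lemma mconv3_restr_fiber_le f g h a b d x :
    nonneg_l1 f -> nonneg_l1 g -> nonneg_l1 h ->
  mconv (mconv (restr_fiber phi a f) (restr_fiber phi b g)) (restr_fiber phi d h) x <=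
  restr_fiber phi (a + b + d) (mconv (mconv f g) h) x.
Proof.
move=> hf hg hh; have hfg := nonneg_l1_mconv hf hg.
apply: le_trans (mconv_restr_fiber_le _ _ _ hfg hh).
apply: (ler_mconv x _ _ (nonneg_l1_restr_fiber _ hfg) (nonneg_l1_restr_fiber _ hh)).
  move=> t; rewrite mconv_restr_fiber_le // andbT.
  by apply: mconv_ge0; exact: nonneg_l1_restr_fiber.
by move=> t; case/andP: (restr_fiber_ge0_le d t hh.1) => -> _; rewrite lexx.
Qed.

End fibers.

Section fiber_estimate.
Variables (R : realType) (G G' : zmodType) (phi : G -> G').
Hypothesis phi_morph : {morph phi : x y / x + y}.
Variables (p : R) (f g h : G -> R).
Hypotheses (hp1 : 1 < p) (hf : nonneg_l1 f) (hg : nonneg_l1 g) (hh : nonneg_l1 h).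

Local Notation q := (p / (p - 1)).
Local Notation F := (mconv (mconv f g) h).
Local Notation f_phi := (fun c : G' => gammap p (restr_fiber phi c f)).
Local Notation g_phi := (fiber_normp phi p g).
Local Notation h_phi := (fiber_normp phi q h).

Let hF : nonneg_l1 F := nonneg_l1_mconv (nonneg_l1_mconv hf hg) hh.

Lemma gammap_fiber_mul_le a b d :
  f_phi a * g_phi b * h_phi d <= norm1 (restr_fiber phi (a + b + d) F).
Proof.
have [->|gb0] := eqVneq (g_phi b) 0; first by rewrite mulr0 mul0r norm1_ge0.
have [->|hd0] := eqVneq (h_phi d) 0; first by rewrite mulr0 norm1_ge0.
have gb_gt0 : 0 < g_phi b by rewrite lt_def gb0 normp_ge0.
have hd_gt0 : 0 < h_phi d by rewrite lt_def hd0 normp_ge0.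
have p0 : p != 0 by rewrite gt_eqF // (lt_trans ltr01).
have q0 : q != 0 by rewrite gt_eqF // divr_gt0 ?subr_gt0 // (lt_trans ltr01).
have g_neq0 := normp_neq0 p0 gb0.
have h_neq0 := normp_neq0 q0 hd0.
have gh_gt0 := mulr_gt0 gb_gt0 hd_gt0.
rewrite -mulrA -ler_pdivlMr; last exact: gh_gt0.
apply: le_trans (gammap_le p _ (nonneg_l1_restr_fiber phi b hg)
  (nonneg_l1_restr_fiber phi d hh) g_neq0 h_neq0) _.
apply: ler_wpM2r; first by rewrite invr_ge0 (ltW gh_gt0).
apply: ler_norm1 => [x|]; last exact: (nonneg_l1_restr_fiber phi (a + b + d) hF).
rewrite (mconv3_restr_fiber_le phi_morph a b d x hf hg hh) andbT.
apply: mconv_ge0 (nonneg_l1_restr_fiber phi d hh) x.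
exact: nonneg_l1_mconv (nonneg_l1_restr_fiber phi a hf) (nonneg_l1_restr_fiber phi b hg).
Qed.

Lemma mconv_fiber_le c :
  mconv (mconv f_phi g_phi) h_phi c <= norm1 (restr_fiber phi c F).
Proof.
apply: ge_sup; first by exists (mconv f_phi g_phi 0 * h_phi (c - 0)), 0.
move=> _ [t _ <-].
have [->|hct0] := eqVneq (h_phi (c - t)) 0; first by rewrite mulr0 norm1_ge0.
have hct_gt0 : 0 < h_phi (c - t) by rewrite lt_def hct0 normp_ge0.
rewrite -ler_pdivlMr //; apply: ge_sup; first by exists (f_phi 0 * g_phi (t - 0)), 0.
move=> _ [s _ <-]; rewrite ler_pdivlMr //.
have sum_c : s + (t - s) + (c - t) = c by rewrite [s + _]addrC subrK addrC subrK.
by have := gammap_fiber_mul_le s (t - s) (c - t); rewrite sum_c.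
Qed.

Lemma norm1_mconv_fiber_le : norm1 (mconv (mconv f_phi g_phi) h_phi) <= norm1 F.
Proof.
have le_F : (\esum_(c in [set: G']) (mconv (mconv f_phi g_phi) h_phi c)%:E <=
             (norm1 F)%:E)%E.
  rewrite -(norm1_fibers phi hF); apply: le_esum => c _.
  by rewrite lee_fin mconv_fiber_le.
have fin_lhs : \esum_(c in [set: G']) (mconv (mconv f_phi g_phi) h_phi c)%:E
    \is a fin_num by rewrite ge0_fin_numE ?esum_ge0_any // (le_lt_trans le_F (ltry _)).
exact: (fine_le fin_lhs _ le_F).
Qed.

End fiber_estimate.

Theorem mainTheorem12 (R : realType) (G G' : zmodType) (phi : G -> G')
    (H : set G)
    (phi_morph : {morph phi : x y / x + y})
    (phi_surj : forall y : G', exists x : G, phi x = y)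
    (phi_ker : forall x : G, phi x = 0 <-> H x)
    (p : R) (hp1 : 1 < p) (f : G -> R) (hf : nonneg_l1 f) :
  let f_phi : G' -> R :=
    fun x => gammap p (fun y : G => if phi y == x then f y else 0) in
  gammap p f_phi <= gammap p f.
Proof.
cbv zeta; have hp := ltW hp1; have hq := conjugate_exponent_ge1 hp1.
apply: gammap_ge => g h hg hh g0 h0.
apply: le_trans (gammap_le p _ (nonneg_l1_fiber_normp phi hg hp)
  (nonneg_l1_fiber_normp phi hh hq) (fiber_normp_neq0 hg hp g0)
  (fiber_normp_neq0 hh hq h0)) _.
rewrite (normp_fiber_normp phi hg hp) (normp_fiber_normp phi hh hq).
apply: ler_wpM2r; first by rewrite invr_ge0 mulr_ge0 ?normp_ge0.
exact: (norm1_mconv_fiber_le phi_morph hp1 hf hg hh).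
Qed.
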